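(* Let $U\in U(N)$ be such that the bistochastic matrix $B$ with $B_{ij}=|U_{ij}|^2$ belongs to the ray of some permutation matrix, i.e. $B=\alpha P+(1-\alpha)W_N$ for a permutation matrix $P$ and some $\alpha\in[0,1]$. For $i,j\in\{1,\dots,N\}$ define $|\psi_{ij}\rangle=\sum_{k=1}^N U_{ik}\,|k\rangle\otimes|k\oplus j\rangle\in\mathbb{C}^N\otimes\mathbb{C}^N$. Then $\{|\psi_{ij}\rangle\}_{i,j=1}^N$ is an orthonormal basis of $\mathbb{C}^N\otimes\mathbb{C}^N$, and all $N^2$ vectors have the same multiset of squared Schmidt coefficients, namely $\{\tfrac{1+\alpha(N-1)}{N},\tfrac{1-\alpha}{N},\dots,\tfrac{1-\alpha}{N}\}$ (with $\tfrac{1-\alpha}{N}$ repeated $N-1$ times). In particular all basis vectors have the same value of any entanglement measure that depends only on the Schmidt coefficients; for $\alpha=1$ the basis is a product basis and for $\alpha=0$ it consists of maximally entangled states.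
   Context: $\{|1\rangle,\dots,|N\rangle\}$ is the computational basis of $\mathbb{C}^N$; $\oplus$ denotes addition modulo $N$ on the labels $\{1,\dots,N\}$. $W_N$ is the $N\times N$ matrix with all entries $1/N$. A bistochastic matrix is a nonnegative real matrix with all row and column sums equal to 1. *)

(* Complex numbers: an arbitrary numClosedFieldType C
   (e.g. R[i] for a real closed field R); reals are the elements of C in Num.real. *)
From HB Require Import structures.
From mathcomp Require Import all_boot all_order all_algebra all_fingroup.
Set Implicit Arguments. Unset Strict Implicit. Unset Printing Implicit Defensive.
Import Order.TTheory GRing.Theory Num.Theory.
Local Open Scope ring_scope.

Definition oplus (N : nat) (k j : 'I_N) : 'I_N :=
  Ordinal (ltn_pmod (k + j) (leq_ltn_trans (leq0n k) (ltn_ord k))).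

Definition adjmx (C : numClosedFieldType) (m n : nat) (A : 'M[C]_(m, n)) : 'M[C]_(n, m) :=
  (map_mx (@Num.conj_op C) A)^T.

Definition unitary_mx (C : numClosedFieldType) (N : nat) (U : 'M[C]_N) : Prop :=
  U *m adjmx U = 1%:M.

(* A vector of C^N (x) C^N is represented by its coefficient matrix X, i.e.
   sum_{a,b} X a b |a> (x) |b>. *)
Definition tensor_inner (C : numClosedFieldType) (N : nat) (X Y : 'M[C]_N) : C :=
  \sum_(a < N) \sum_(b < N) (X a b)^* * Y a b.

(* |psi_ij> = sum_k U_ik |k> (x) |k (+) j> *)
Definition psi (C : numClosedFieldType) (N : nat) (U : 'M[C]_N) (i j : 'I_N) : 'M[C]_N :=
  \matrix_(a < N, b < N) (if b == oplus a j then U i a else 0).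

(* s (with multiplicity, as a row vector) is a family of Schmidt coefficients of X:
   X = sum_k s_k e_k (x) f_k with orthonormal (e_k), (f_k), s_k >= 0. *)
Definition schmidt_decomposition (C : numClosedFieldType) (N : nat)
    (X : 'M[C]_N) (s : 'rV[C]_N) : Prop :=
  exists V W : 'M[C]_N, [/\ unitary_mx V, unitary_mx W,
     (forall k, 0 <= s 0 k) & X = V *m diag_mx s *m W^T].

(* The coefficient matrix of psi_ij is diag(U_i1, ..., U_iN) times the permutation
   matrix of k |-> k (+) j.  Splitting each U_ik into its phase and its modulus
   exhibits a Schmidt decomposition whose coefficients are |U_i1|, ..., |U_iN|;
   on the ray of P these squared moduli are alpha + (1 - alpha)/N once (at k = P i)
   and (1 - alpha)/N otherwise.  Orthonormality and completeness of the psi_ij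
   follow from unitarity of U, because the inner product <psi_ij, X> only sees the
   entries X k (k (+) j) and k |-> k (+) j is a bijection. *)
From HB Require Import structures.
From mathcomp Require Import all_boot all_order all_algebra all_fingroup.
From mathcomp Require Import ring.
Import Order.TTheory GRing.Theory Num.Theory.
Local Open Scope ring_scope.

Lemma oplusI {N} (a : 'I_N) : injective (oplus a).
Proof.
move=> j j' /(congr1 val) /= /eqP; rewrite eqn_modDl => /eqP.
by rewrite !modn_small // => /val_inj.
Qed.

Lemma oplusIr {N} (j : 'I_N) : injective (fun a : 'I_N => oplus a j).
Proof.
move=> a a' /(congr1 val) /= /eqP; rewrite eqn_modDr => /eqP.
by rewrite !modn_small // => /val_inj.
Qed.

Lemma perm_mxE (R : pzSemiRingType) n (s : 'S_n) i j :
  (perm_mx s i j : R) = (s i == j)%:R.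
Proof. by rewrite perm_mxEsub !mxE. Qed.

Section Unitary.
Variables (C : numClosedFieldType) (N : nat).
Implicit Types (U : 'M[C]_N) (s : 'S_N) (v : 'rV[C]_N).

Lemma unitary_row_ortho U i i' : unitary_mx U ->
  \sum_(a < N) (U i a)^* * U i' a = (i == i')%:R.
Proof.
move=> /(congr1 (fun M : 'M[C]_N => M i' i)); rewrite !mxE eq_sym => <-.
by apply: eq_bigr => a _; rewrite !mxE mulrC.
Qed.

Lemma unitary_col_ortho U a a' : unitary_mx U ->
  \sum_(i < N) (U i a)^* * U i a' = (a == a')%:R.
Proof.
move=> /mulmx1C /(congr1 (fun M : 'M[C]_N => M a a')); rewrite !mxE => <-.
by apply: eq_bigr => i _; rewrite !mxE.
Qed.

Lemma unitary_adjK U (x : 'I_N -> C) a : unitary_mx U ->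
  \sum_(i < N) (\sum_(a' < N) (U i a')^* * x a') * U i a = x a.
Proof.
move=> unitU; under eq_bigr do rewrite big_distrl.
rewrite exchange_big /=.
under eq_bigr => a' _.
  under eq_bigr do rewrite mulrAC.
  rewrite -big_distrl /= unitary_col_ortho //.
  over.
by rewrite (bigD1 a) //= eqxx mul1r big1 ?addr0 // => a' /negbTE ->; rewrite mul0r.
Qed.

Lemma unitary_diag_mx v : (forall k, v 0 k * (v 0 k)^* = 1) ->
  unitary_mx (diag_mx v).
Proof.
move=> vK; rewrite /unitary_mx /adjmx.
rewrite (map_diag_mx (Num.conj_op : {rmorphism C -> C})) tr_diag_mx mul_diag_mx.
by apply/matrixP => a b; rewrite !mxE; case: eqP => [->|_]; rewrite ?vK ?mulr0.
Qed.

Lemma unitary_perm_mx s : unitary_mx (perm_mx s : 'M[C]_N).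
Proof.
rewrite /unitary_mx /adjmx (map_perm_mx (Num.conj_op : {rmorphism C -> C})).
by rewrite tr_perm_mx -perm_mxM mulgV perm_mx1.
Qed.

End Unitary.

(* The phase of 0 is chosen to be 1, so that it stays of modulus one. *)
Definition phase {C : numClosedFieldType} (x : C) : C :=
  if x == 0 then 1 else x / `|x|.

Section Phase.
Variable C : numClosedFieldType.
Implicit Type x : C.

Lemma phaseJ x : phase x * (phase x)^* = 1.
Proof.
rewrite /phase; case: eqP => [_|/eqP x0]; first by rewrite conjC1 mulr1.
rewrite rmorphM fmorphV /= conj_normC mulrACA -normCK -invfM -expr2 mulfV //.
by rewrite expf_eq0 normr_eq0.
Qed.

Lemma phase_normE x : phase x * `|x| = x.
Proof.
rewrite /phase; case: eqP => [->|/eqP x0]; first by rewrite normr0 mulr0.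
by rewrite divfK // normr_eq0.
Qed.

End Phase.

Section Psi.
Variables (C : numClosedFieldType) (N : nat) (U : 'M[C]_N).

Lemma tensor_inner_psil i j (X : 'M[C]_N) :
  tensor_inner (psi U i j) X = \sum_(a < N) (U i a)^* * X a (oplus a j).
Proof.
apply: eq_bigr => a _; rewrite (bigD1 (oplus a j)) //= big1 => [|b /negbTE nb].
  by rewrite mxE eqxx addr0.
by rewrite mxE nb conjC0 mul0r.
Qed.

Lemma psi_orthonormal i j i' j' : unitary_mx U ->
  tensor_inner (psi U i j) (psi U i' j') = ((i == i') && (j == j'))%:R.
Proof.
move=> unitU; rewrite tensor_inner_psil.
have [<-|nj] := eqVneq j' j.
  under eq_bigr => a _ do rewrite mxE eqxx.
  by rewrite andbT unitary_row_ortho.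
rewrite andbF big1 // => a _.
by rewrite mxE (inj_eq (oplusI a)) eq_sym (negbTE nj) mulr0.
Qed.

Lemma psi_expansion (X : 'M[C]_N) : unitary_mx U ->
  X = \sum_(i < N) \sum_(j < N) tensor_inner (psi U i j) X *: psi U i j.
Proof.
move=> unitU; apply/matrixP => a b.
rewrite summxE; under eq_bigr => i _ do rewrite summxE.
rewrite exchange_big /=.
under eq_bigr => j _ do under eq_bigr => i _ do rewrite !mxE tensor_inner_psil.
have coef j : \sum_(i < N) (\sum_(a' < N) (U i a')^* * X a' (oplus a' j)) *
    (if b == oplus a j then U i a else 0) = (b == oplus a j)%:R * X a (oplus a j).
  case: eqP => _; last by rewrite mul0r big1 // => i _; rewrite mulr0.
  by rewrite mul1r (@unitary_adjK _ _ U (fun a' => X a' (oplus a' j))).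
under eq_bigr do rewrite coef.
transitivity (\sum_(b' < N) (b == b')%:R * X a b'); last exact: reindex_inj (oplusI a).
rewrite (bigD1 b) //= eqxx mul1r big1 ?addr0 // => b' /negbTE.
by rewrite eq_sym => ->; rewrite mul0r.
Qed.

Lemma psi_schmidt i j : schmidt_decomposition (psi U i j) (\row_k `|U i k|).
Proof.
pose s := perm (oplusIr j).
exists (diag_mx (\row_a phase (U i a))), (perm_mx s^-1); split.
- by apply: unitary_diag_mx => a; rewrite mxE phaseJ.
- exact: unitary_perm_mx.
- by move=> k; rewrite mxE normr_ge0.
rewrite tr_perm_mx invgK -mulmxA !mul_diag_mx; apply/matrixP => a b.
rewrite !mxE permE eq_sym; case: eqP => _; last by rewrite mulr0n !mulr0.
by rewrite mulr1n mulr1 phase_normE.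
Qed.

End Psi.

Theorem mainTheorem6 (C : numClosedFieldType) (N : nat) (U : 'M[C]_N)
    (P : 'S_N) (alpha : C) :
  unitary_mx U ->
  alpha \is Num.real -> 0 <= alpha <= 1 ->
  (forall i j : 'I_N,
      `|U i j| ^+ 2 = alpha * (perm_mx P i j : C) + (1 - alpha) / N%:R) ->
  (* orthonormal *)
  (forall i j i' j' : 'I_N,
      tensor_inner (psi U i j) (psi U i' j') = ((i == i') && (j == j'))%:R) /\
  (* spanning, hence a basis *)
  (forall X : 'M[C]_N, exists c : 'M[C]_N,
      X = \sum_(i < N) \sum_(j < N) c i j *: psi U i j) /\
  (* common Schmidt coefficients *)
  (forall i j : 'I_N, exists (s : 'rV[C]_N) (k0 : 'I_N),
      schmidt_decomposition (psi U i j) s /\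
      forall k : 'I_N, s 0 k ^+ 2 =
        (if k == k0 then (1 + alpha * (N%:R - 1)) / N%:R else (1 - alpha) / N%:R)).
Proof.
move=> unitU _ _ onRay; split; first by move=> *; apply: psi_orthonormal.
split.
  move=> X; exists (\matrix_(i, j) tensor_inner (psi U i j) X).
  by under eq_bigr do under eq_bigr do rewrite mxE; apply: psi_expansion.
move=> i j; exists (\row_k `|U i k|), (P i); split; first exact: psi_schmidt.
have N0 : N%:R != 0 :> C by rewrite pnatr_eq0 -lt0n (leq_ltn_trans _ (ltn_ord i)).
move=> k; rewrite mxE onRay perm_mxE [k == P i]eq_sym.
by case: (P i == k); rewrite /= ?mulr0 ?add0r //; field.
Qed.
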